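(* Let $g\colon\mathbb{S}^1\to\mathbb{S}^1$ be an orientation-preserving $L$-bi-Lipschitz homeomorphism (with respect to $\sigma$), and let $\psi\colon Z_2\to Z_2$ be the map obtained from its radial extension as in the context. Then $\psi$ is $L$-bi-Lipschitz with respect to $\sigma$.
   Context: Let $\mathbb{S}^2\subset\mathbb{R}^3$ be the unit sphere with great-circle distance $\sigma$, $\mathbb{S}^1$ the equator, $Z_2$ the open northern hemisphere ($(0,0,1)\in Z_2$). Let $P(x_1,x_2,x_3)=(x_1,x_2)/(1+x_3)$ be the stereographic projection from the south pole $(0,0,-1)$ onto $\mathbb{R}^2$; it fixes $\mathbb{S}^1$ (identified with the unit circle) and maps $Z_2$ onto the open unit disk. Set $\widetilde g=P\circ g\circ P^{-1}$ on the unit circle, and let $\widetilde G\colon\mathbb{R}\to\mathbb{R}$ be a homeomorphism with $\widetilde g(e^{i\theta})=e^{i\widetilde G(\theta)}$. The radial extension is $\widetilde\psi(re^{i\theta})=re^{i\widetilde G(\theta)}$ for $0\le r\le1$, and $\psi=P^{-1}\circ\widetilde\psi\circ P|_{Z_2}$. *)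

From Stdlib Require Import Reals Lra.
Open Scope R_scope.

Definition pt3 : Type := (R * R * R)%type.

Definition px (p : pt3) : R := fst (fst p).
Definition py (p : pt3) : R := snd (fst p).
Definition pz (p : pt3) : R := snd p.

Definition dot3 (p q : pt3) : R := px p * px q + py p * py q + pz p * pz q.

Definition on_S2 (p : pt3) : Prop := dot3 p p = 1.
Definition on_S1 (p : pt3) : Prop := on_S2 p /\ pz p = 0.
Definition in_Z2 (p : pt3) : Prop := on_S2 p /\ 0 < pz p.

Definition gc_dist (p q : pt3) : R := acos (dot3 p q).

Definition eq_pt (t : R) : pt3 := (cos t, sin t, 0).

Definition bi_lipschitz_on (A : pt3 -> Prop) (L : R) (f : pt3 -> pt3) : Prop :=
  0 < L /\
  forall p q, A p -> A q ->
    gc_dist p q / L <= gc_dist (f p) (f q) <= L * gc_dist p q.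

(* homeomorphism of S^1 (continuity of g and its inverse follows from
   bi-Lipschitz, which is assumed separately) : bijection of S^1 *)
Definition maps_S1_onto_S1 (g : pt3 -> pt3) : Prop :=
  (forall p, on_S1 p -> on_S1 (g p)) /\
  (forall q, on_S1 q -> exists p, on_S1 p /\ g p = q) /\
  (forall p q, on_S1 p -> on_S1 q -> g p = g q -> p = q).

Definition is_lift (g : pt3 -> pt3) (G : R -> R) : Prop :=
  forall t, g (eq_pt t) = eq_pt (G t).

Definition orientation_preserving (g : pt3 -> pt3) : Prop :=
  exists F : R -> R, continuity F /\
    (forall s t, s < t -> F s < F t) /\ is_lift g F.

Definition homeo_R (G : R -> R) : Prop :=
  continuity G /\ exists H : R -> R, continuity H /\
    (forall t, H (G t) = t) /\ (forall t, G (H t) = t).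

(* inverse stereographic projection (from the south pole) R^2 -> S^2 *)
Definition Pinv (u v : R) : pt3 :=
  let n := u * u + v * v in
  (2 * u / (1 + n), 2 * v / (1 + n), (1 - n) / (1 + n)).

Definition stereo (p : pt3) : R * R :=
  (px p / (1 + pz p), py p / (1 + pz p)).

Definition radial_ext (G : R -> R) (r t : R) : R * R :=
  (r * cos (G t), r * sin (G t)).

(* psi = P^{-1} o psi~ o P, evaluated at the point of Z_2 whose
   projection is r e^{i t}, 0 <= r < 1 *)
Definition psi (G : R -> R) (r t : R) : pt3 :=
  Pinv (fst (radial_ext G r t)) (snd (radial_ext G r t)).

From Stdlib Require Import Reals Lra.
From Coquelicot Require Import Coquelicot.
Open Scope R_scope.

(* In polar coordinates the point P^{-1}(r e^{it}) of the
   northern hemisphere has height c = (1-r^2)/(1+r^2) and horizontal radius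
   s = 2r/(1+r^2), so the spherical distance between two such points is
   F(δ) = acos (a + b cos δ), with a = c1 c2, b = s1 s2, depending on the
   angles only through δ = acos (cos (t1 - t2)), the equatorial distance of
   e^{it1} and e^{it2}.  The map ψ keeps the radii and replaces t by G t, so
   it replaces δ by the equatorial distance δ' of g(e^{it1}) and g(e^{it2}),
   and by hypothesis δ / L <= δ' <= L δ.  The theorem therefore reduces to a
   property of the single real function F: it is nondecreasing and
   "star-shaped", F(l x) <= l F(x) for l >= 1 and 0 < x <= l x <= π, hence
   δ' <= L δ implies F δ' <= L F δ whenever L >= 1.  Star-shapedness reduces,
   via half-angle formulas, to the monotonicity of t ↦ sin(l t) / sin t and
   t ↦ cos(l t) / cos t on [0, π/(2l)] for l >= 1, proved by differentiation. *)

Lemma antitone_of_deriv_nonpos (f f' : R -> R) a b : a <= b ->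
  (forall c, a <= c <= b -> is_derive f c (f' c)) ->
  (forall c, a < c < b -> f' c <= 0) -> f b <= f a.
Proof.
  intros Hab Hd Hn. destruct (Req_dec a b) as [->|Hne]; [lra|].
  destruct (MVT_cor2 f f' a b) as [c [Hfc Hc]]; [lra| |].
  - intros c Hc. apply is_derive_Reals. auto.
  - assert (f' c <= 0) by (apply Hn; lra). nra.
Qed.

(* Sign of the numerator of the derivative of t ↦ sin (l t) / sin t. *)
Lemma sin_scaled_wronskian_nonpos l t : 1 <= l -> 0 <= t -> l * t <= PI / 2 ->
  l * cos (l * t) * sin t - sin (l * t) * cos t <= 0.
Proof.
  intros Hl Ht Hlt. pose proof PI_RGT_0.
  pose (h := fun t => l * cos (l * t) * sin t - sin (l * t) * cos t).
  assert (Hh : h t <= h 0).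
  { apply (antitone_of_deriv_nonpos h (fun t => (1 - l * l) * sin (l * t) * sin t));
      [lra| |].
    - intros c _. unfold h. auto_derive; auto. ring.
    - intros c Hc. assert (l * c <= l * t) by (apply Rmult_le_compat_l; lra).
      assert (0 <= sin (l * c)) by (apply sin_ge_0; nra).
      assert (0 <= sin c) by (apply sin_ge_0; nra).
      assert (0 <= sin (l * c) * sin c) by nra.
      assert (1 - l * l <= 0) by nra. nra. }
  unfold h in Hh. rewrite Rmult_0_r, sin_0 in Hh. lra.
Qed.

(* Sign of the numerator of the derivative of t ↦ cos (l t) / cos t. *)
Lemma cos_scaled_wronskian_nonpos l t : 1 <= l -> 0 <= t -> l * t <= PI / 2 ->
  - l * sin (l * t) * cos t + cos (l * t) * sin t <= 0.
Proof.
  intros Hl Ht Hlt. pose proof PI_RGT_0.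
  pose (h := fun t => - l * sin (l * t) * cos t + cos (l * t) * sin t).
  assert (Hh : h t <= h 0).
  { apply (antitone_of_deriv_nonpos h (fun t => (1 - l * l) * cos (l * t) * cos t));
      [lra| |].
    - intros c _. unfold h. auto_derive; auto. ring.
    - intros c Hc. assert (l * c <= l * t) by (apply Rmult_le_compat_l; lra).
      assert (0 <= cos (l * c)) by (apply cos_ge_0; nra).
      assert (0 <= cos c) by (apply cos_ge_0; nra).
      assert (0 <= cos (l * c) * cos c) by nra.
      assert (1 - l * l <= 0) by nra. nra. }
  unfold h in Hh. rewrite Rmult_0_r, sin_0 in Hh. lra.
Qed.

(* t ↦ sin (l t) / sin t is nonincreasing on ]0, π/(2l)], in cross-multiplied form. *)
Lemma sin_scaled_ratio_antitone l u v : 1 <= l -> 0 <= u <= v -> l * v <= PI / 2 ->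
  sin (l * v) * sin u <= sin (l * u) * sin v.
Proof.
  intros Hl Huv Hv. pose proof PI_RGT_0.
  destruct (Req_dec u 0) as [->|Hu0].
  { rewrite Rmult_0_r, sin_0. lra. }
  assert (Hpos : forall t, u <= t <= v -> 0 < sin t).
  { intros t Ht. assert (l * t <= l * v) by (apply Rmult_le_compat_l; lra).
    apply sin_gt_0; nra. }
  pose (ratio := fun t => sin (l * t) / sin t).
  assert (Hratio : ratio v <= ratio u).
  { apply (antitone_of_deriv_nonpos ratio
      (fun t => (l * cos (l * t) * sin t - sin (l * t) * cos t) / (sin t) ^ 2)); [lra| |].
    - intros c Hc. specialize (Hpos c Hc). unfold ratio.
      auto_derive; [lra|]. field. lra.
    - intros c Hc. specialize (Hpos c ltac:(lra)).
      assert (l * c <= l * v) by (apply Rmult_le_compat_l; lra).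
      pose proof (sin_scaled_wronskian_nonpos l c Hl ltac:(lra) ltac:(lra)).
      assert (0 < / (sin c) ^ 2) by (apply Rinv_0_lt_compat; nra).
      unfold Rdiv. nra. }
  pose proof (Hpos u ltac:(lra)). pose proof (Hpos v ltac:(lra)).
  unfold ratio in Hratio.
  apply Rmult_le_compat_r with (r := sin u * sin v) in Hratio; [|nra].
  replace (sin (l * v) / sin v * (sin u * sin v)) with (sin (l * v) * sin u)
    in Hratio by (field; lra).
  replace (sin (l * u) / sin u * (sin u * sin v)) with (sin (l * u) * sin v)
    in Hratio by (field; lra).
  lra.
Qed.

(* t ↦ cos (l t) / cos t is nonincreasing on [0, π/(2l)], in cross-multiplied form. *)
Lemma cos_scaled_ratio_antitone l u v : 1 <= l -> 0 <= v <= u -> l * u <= PI / 2 ->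
  cos (l * u) * cos v <= cos (l * v) * cos u.
Proof.
  intros Hl Hvu Hu. pose proof PI_RGT_0.
  destruct (Req_dec l 1) as [->|Hl1].
  { rewrite !Rmult_1_l. lra. }
  assert (Hu2 : u < PI / 2).
  { destruct (Req_dec u 0); [lra|]. assert (u < l * u) by nra. lra. }
  assert (Hpos : forall t, 0 <= t <= u -> 0 < cos t)
    by (intros t Ht; apply cos_gt_0; lra).
  pose (ratio := fun t => cos (l * t) / cos t).
  assert (Hratio : ratio u <= ratio v).
  { apply (antitone_of_deriv_nonpos ratio
      (fun t => (- l * sin (l * t) * cos t + cos (l * t) * sin t) / (cos t) ^ 2));
      [lra| |].
    - intros c Hc. specialize (Hpos c ltac:(lra)). unfold ratio.
      auto_derive; [lra|]. field. lra.
    - intros c Hc. specialize (Hpos c ltac:(lra)).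
      assert (l * c <= l * u) by (apply Rmult_le_compat_l; lra).
      pose proof (cos_scaled_wronskian_nonpos l c Hl ltac:(lra) ltac:(lra)).
      assert (0 < / (cos c) ^ 2) by (apply Rinv_0_lt_compat; nra).
      unfold Rdiv. nra. }
  pose proof (Hpos u ltac:(lra)). pose proof (Hpos v ltac:(lra)).
  unfold ratio in Hratio.
  apply Rmult_le_compat_r with (r := cos u * cos v) in Hratio; [|nra].
  replace (cos (l * u) / cos u * (cos u * cos v)) with (cos (l * u) * cos v)
    in Hratio by (field; lra).
  replace (cos (l * v) / cos v * (cos u * cos v)) with (cos (l * v) * cos u)
    in Hratio by (field; lra).
  lra.
Qed.

Lemma angle_le_of_cos_ge x y : 0 <= x <= PI -> 0 <= y <= PI -> cos y <= cos x -> x <= y.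
Proof.
  intros Hx Hy H. destruct (Rle_lt_or_eq_dec _ _ H) as [Hlt|Heq].
  - apply Rlt_le, (cos_decreasing_0 y x); lra.
  - right. apply cos_inj; auto.
Qed.

Lemma acos_le_of_cos_le c T : -1 <= c <= 1 -> 0 <= T <= PI -> cos T <= c -> acos c <= T.
Proof.
  intros Hc HT H. apply angle_le_of_cos_ge; [apply acos_bound|auto|].
  rewrite cos_acos; auto.
Qed.

Lemma acos_antitone x y : -1 <= x -> x <= y -> y <= 1 -> acos y <= acos x.
Proof.
  intros. apply acos_le_of_cos_le; [lra|apply acos_bound|]. rewrite cos_acos; lra.
Qed.

(* The spherical distance between two points of fixed heights as a function
   of the longitude difference x: acos (a + b cos x), for coefficients with
   b >= 0 and a ± b in [-1, 1]. *)
Definition lon_dist (a b x : R) : R := acos (a + b * cos x).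

Section LongitudeDistance.

Variables a b : R.
Hypothesis b_ge0 : 0 <= b.
Hypothesis ab_le1 : a + b <= 1.
Hypothesis ab_ge_m1 : -1 <= a - b.

Lemma lon_dist_arg_range x : -1 <= a + b * cos x <= 1.
Proof. pose proof (COS_bound x). nra. Qed.

Lemma cos_lon_dist x : cos (lon_dist a b x) = a + b * cos x.
Proof. apply cos_acos, lon_dist_arg_range. Qed.

Lemma lon_dist_mono x y : 0 <= x -> x <= y -> y <= PI -> lon_dist a b x <= lon_dist a b y.
Proof.
  intros. unfold lon_dist. pose proof (COS_bound x). pose proof (COS_bound y).
  assert (cos y <= cos x).
  { destruct (Req_dec x y) as [->|]; [lra|]. apply Rlt_le, cos_decreasing_1; lra. }
  apply acos_antitone; nra.
Qed.

(* Half-angle form of the key estimate when θ <= x, using the sine ratio: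
   from cos (2u) = a + b cos (2v) deduce cos (2lu) <= a + b cos (2lv). *)
Lemma scaled_cos_bound_sin_case l u v : 1 <= l -> 0 <= u <= v -> 0 < v ->
  l * v <= PI / 2 -> cos (2 * u) = a + b * cos (2 * v) ->
  cos (2 * (l * u)) <= a + b * cos (2 * (l * v)).
Proof.
  intros Hl Huv Hv Hlv Hcos. pose proof PI_RGT_0.
  pose proof (sin_scaled_ratio_antitone l u v Hl Huv Hlv) as HM.
  assert (l * u <= l * v) by (apply Rmult_le_compat_l; lra).
  assert (0 <= sin u) by (apply sin_ge_0; nra).
  assert (0 < sin v) by (apply sin_gt_0; nra).
  assert (0 <= sin (l * v)) by (apply sin_ge_0; nra).
  assert (0 <= sin (l * u)) by (apply sin_ge_0; nra).
  assert (HM2 : (sin (l * v) * sin u) ^ 2 <= (sin (l * u) * sin v) ^ 2).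
  { apply pow_incr. split; [nra|exact HM]. }
  rewrite !cos_2a_sin in *.
  assert (Hb : b * sin v ^ 2 <= sin u ^ 2) by nra.
  assert (Hsq : sin v ^ 2 <= sin (l * v) ^ 2).
  { apply pow_incr. split; [lra|]. apply sin_incr_1; nra. }
  assert (Hk : sin u ^ 2 + b * (sin (l * v) ^ 2 - sin v ^ 2) <= sin (l * u) ^ 2).
  { apply Rmult_le_reg_r with (sin v ^ 2); [nra|].
    assert (b * sin v ^ 2 * (sin (l * v) ^ 2 - sin v ^ 2)
              <= sin u ^ 2 * (sin (l * v) ^ 2 - sin v ^ 2))
      by (apply Rmult_le_compat_r; lra).
    nra. }
  nra.
Qed.

(* Half-angle form of the key estimate when θ > x, using the cosine ratio. *)
Lemma scaled_cos_bound_cos_case l u v : 1 <= l -> 0 < v < u ->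
  l * u < PI / 2 -> cos (2 * u) = a + b * cos (2 * v) ->
  cos (2 * (l * u)) <= a + b * cos (2 * (l * v)).
Proof.
  intros Hl Hvu Hlu Hcos. pose proof PI_RGT_0.
  pose proof (cos_scaled_ratio_antitone l u v Hl ltac:(lra) ltac:(lra)) as HM.
  assert (l * v <= l * u) by (apply Rmult_le_compat_l; lra).
  assert (0 <= cos u) by (apply cos_ge_0; nra).
  assert (0 < cos v) by (apply cos_gt_0; nra).
  assert (0 <= cos (l * v)) by (apply cos_ge_0; nra).
  assert (0 <= cos (l * u)) by (apply cos_ge_0; nra).
  assert (HM2 : (cos (l * u) * cos v) ^ 2 <= (cos (l * v) * cos u) ^ 2).
  { apply pow_incr. split; [nra|exact HM]. }
  rewrite !cos_2a_cos in *.
  assert (Hb : b * cos v ^ 2 <= cos u ^ 2) by nra.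
  assert (Hsq : cos (l * v) ^ 2 <= cos v ^ 2).
  { apply pow_incr. split; [lra|]. apply cos_decr_1; nra. }
  assert (Hk : cos (l * u) ^ 2 <= cos u ^ 2 + b * (cos (l * v) ^ 2 - cos v ^ 2)).
  { apply Rmult_le_reg_r with (cos v ^ 2); [nra|].
    assert (b * cos v ^ 2 * (cos v ^ 2 - cos (l * v) ^ 2)
              <= cos u ^ 2 * (cos v ^ 2 - cos (l * v) ^ 2))
      by (apply Rmult_le_compat_r; lra).
    nra. }
  nra.
Qed.

Lemma lon_dist_scale_le l x : 1 <= l -> 0 < x -> l * x <= PI ->
  lon_dist a b (l * x) <= l * lon_dist a b x.
Proof.
  intros Hl Hx Hlx. pose proof PI_RGT_0.
  set (th := lon_dist a b x).
  assert (Hth : 0 <= th <= PI) by apply acos_bound.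
  destruct (Rle_lt_dec PI (l * th)) as [Hbig|Hsmall].
  { pose proof (acos_bound (a + b * cos (l * x))). unfold lon_dist. lra. }
  apply acos_le_of_cos_le; [apply lon_dist_arg_range|nra|].
  assert (Hcos : cos (2 * (th / 2)) = a + b * cos (2 * (x / 2))).
  { replace (2 * (th / 2)) with th by field. replace (2 * (x / 2)) with x by field.
    apply cos_lon_dist. }
  replace (l * th) with (2 * (l * (th / 2))) by field.
  replace (l * x) with (2 * (l * (x / 2))) by field.
  destruct (Rle_lt_dec (th / 2) (x / 2)).
  - apply scaled_cos_bound_sin_case; auto; lra.
  - apply scaled_cos_bound_cos_case; auto; lra.
Qed.

Lemma lon_dist_lipschitz_transfer d d' L : 1 <= L ->
  0 <= d <= PI -> 0 <= d' <= PI -> d' <= L * d ->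
  lon_dist a b d' <= L * lon_dist a b d.
Proof.
  intros HL Hd Hd' H.
  assert (HF : 0 <= lon_dist a b d) by apply acos_bound.
  destruct (Rle_lt_dec d' d) as [Hle|Hlt].
  - pose proof (lon_dist_mono d' d ltac:(lra) Hle ltac:(lra)). nra.
  - assert (Hd0 : 0 < d) by nra.
    set (l := d' / d).
    assert (Hl : 1 <= l) by (unfold l; apply Rle_div_r; lra).
    assert (HlL : l <= L) by (unfold l; apply Rle_div_l; lra).
    assert (Hscale : d' = l * d) by (unfold l; field; lra).
    rewrite Hscale.
    pose proof (lon_dist_scale_le l d Hl Hd0 ltac:(lra)).
    nra.
Qed.

Lemma lon_dist_bilipschitz_transfer d d' L : 1 <= L ->
  0 <= d <= PI -> 0 <= d' <= PI -> d / L <= d' <= L * d ->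
  lon_dist a b d / L <= lon_dist a b d' <= L * lon_dist a b d.
Proof.
  intros HL Hd Hd' [Hlo Hhi]. split.
  - assert (d <= L * d').
    { apply Rmult_le_compat_l with (r := L) in Hlo; [|lra].
      replace (L * (d / L)) with d in Hlo by (field; lra). lra. }
    pose proof (lon_dist_lipschitz_transfer d' d L HL Hd' Hd H).
    apply Rmult_le_reg_l with L; [lra|].
    replace (L * (lon_dist a b d / L)) with (lon_dist a b d) by (field; lra). lra.
  - apply lon_dist_lipschitz_transfer; auto.
Qed.

End LongitudeDistance.

Lemma Pinv_polar r t : Pinv (r * cos t) (r * sin t) =
  (2 * r / (1 + r * r) * cos t, 2 * r / (1 + r * r) * sin t, (1 - r * r) / (1 + r * r)).
Proof.
  unfold Pinv.
  replace (r * cos t * (r * cos t) + r * sin t * (r * sin t)) with (r * r)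
    by (pose proof (sin2_cos2 t); unfold Rsqr in *; nra).
  assert (0 < 1 + r * r) by nra.
  apply (f_equal2 pair); [apply (f_equal2 pair)|]; field; lra.
Qed.

Definition height (r : R) : R := (1 - r * r) / (1 + r * r).
Definition hradius (r : R) : R := 2 * r / (1 + r * r).

Lemma dot_Pinv_polar r1 t1 r2 t2 :
  dot3 (Pinv (r1 * cos t1) (r1 * sin t1)) (Pinv (r2 * cos t2) (r2 * sin t2)) =
  height r1 * height r2 + hradius r1 * hradius r2 * cos (t1 - t2).
Proof.
  rewrite !Pinv_polar. unfold dot3, px, py, pz, height, hradius; simpl.
  rewrite cos_minus. ring.
Qed.

Lemma polar_coeffs_admissible r1 r2 : 0 <= r1 -> 0 <= r2 ->
  0 <= hradius r1 * hradius r2 /\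
  height r1 * height r2 + hradius r1 * hradius r2 <= 1 /\
  -1 <= height r1 * height r2 - hradius r1 * hradius r2.
Proof.
  intros H1 H2. unfold height, hradius.
  set (c1 := (1 - r1 * r1) / (1 + r1 * r1)). set (c2 := (1 - r2 * r2) / (1 + r2 * r2)).
  set (s1 := 2 * r1 / (1 + r1 * r1)). set (s2 := 2 * r2 / (1 + r2 * r2)).
  assert (E1 : c1 * c1 + s1 * s1 = 1) by (unfold c1, s1; field; nra).
  assert (E2 : c2 * c2 + s2 * s2 = 1) by (unfold c2, s2; field; nra).
  assert (0 <= s1) by (unfold s1; apply Rmult_le_pos; [lra|apply Rlt_le, Rinv_0_lt_compat; nra]).
  assert (0 <= s2) by (unfold s2; apply Rmult_le_pos; [lra|apply Rlt_le, Rinv_0_lt_compat; nra]).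
  pose proof (pow2_ge_0 (c1 - c2)). pose proof (pow2_ge_0 (s1 - s2)).
  pose proof (pow2_ge_0 (c1 + c2)).
  split; [nra|split; nra].
Qed.

Lemma gc_dist_Pinv_polar r1 t1 r2 t2 :
  gc_dist (Pinv (r1 * cos t1) (r1 * sin t1)) (Pinv (r2 * cos t2) (r2 * sin t2)) =
  lon_dist (height r1 * height r2) (hradius r1 * hradius r2)
    (gc_dist (eq_pt t1) (eq_pt t2)).
Proof.
  unfold gc_dist, lon_dist. rewrite dot_Pinv_polar. do 2 f_equal.
  unfold dot3, eq_pt, px, py, pz; simpl.
  rewrite cos_acos; [rewrite cos_minus; ring|].
  pose proof (COS_bound (t1 - t2)). rewrite cos_minus in H. lra.
Qed.

Lemma eq_pt_on_S1 t : on_S1 (eq_pt t).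
Proof.
  unfold on_S1, on_S2, dot3, eq_pt, px, py, pz; simpl. split; [|reflexivity].
  pose proof (sin2_cos2 t). unfold Rsqr in *. lra.
Qed.

(* e^{i0} and e^{iπ} are antipodal; they witness that L >= 1. *)
Lemma gc_dist_eq_pt_antipodal : gc_dist (eq_pt 0) (eq_pt PI) = PI.
Proof.
  unfold gc_dist, dot3, eq_pt, px, py, pz; simpl.
  rewrite cos_0, sin_0, cos_PI, sin_PI.
  replace (1 * -1 + 0 * 0 + 0 * 0) with (- (1)) by ring.
  rewrite acos_opp, acos_1. ring.
Qed.

Lemma bilipschitz_const_ge1 L d d' : 0 < L -> 0 < d -> d / L <= d' <= L * d -> 1 <= L.
Proof.
  intros HL Hd [Hlo Hhi].
  apply Rmult_le_compat_r with (r := L) in Hlo; [|lra].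
  replace (d / L * L) with d in Hlo by (field; lra).
  assert (1 <= L * L) by (apply Rmult_le_reg_l with d; nra).
  nra.
Qed.

Theorem lemma5 (g : pt3 -> pt3) (L : R) (G : R -> R) :
  maps_S1_onto_S1 g ->
  orientation_preserving g ->
  bi_lipschitz_on on_S1 L g ->
  homeo_R G -> is_lift g G ->
  forall r1 t1 r2 t2 : R,
    0 <= r1 < 1 -> 0 <= r2 < 1 ->
    gc_dist (Pinv (r1 * cos t1) (r1 * sin t1)) (Pinv (r2 * cos t2) (r2 * sin t2)) / L
      <= gc_dist (psi G r1 t1) (psi G r2 t2)
      <= L * gc_dist (Pinv (r1 * cos t1) (r1 * sin t1)) (Pinv (r2 * cos t2) (r2 * sin t2)).
Proof.
  intros _ _ [HL Hbi] _ Hlift r1 t1 r2 t2 Hr1 Hr2.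
  assert (HL1 : 1 <= L).
  { pose proof (Hbi (eq_pt 0) (eq_pt PI) (eq_pt_on_S1 _) (eq_pt_on_S1 _)) as Hpi.
    rewrite gc_dist_eq_pt_antipodal in Hpi.
    exact (bilipschitz_const_ge1 L PI _ HL PI_RGT_0 Hpi). }
  pose proof (Hbi (eq_pt t1) (eq_pt t2) (eq_pt_on_S1 _) (eq_pt_on_S1 _)) as Hg.
  rewrite !Hlift in Hg.
  change (psi G r1 t1) with (Pinv (r1 * cos (G t1)) (r1 * sin (G t1))).
  change (psi G r2 t2) with (Pinv (r2 * cos (G t2)) (r2 * sin (G t2))).
  rewrite !gc_dist_Pinv_polar.
  destruct (polar_coeffs_admissible r1 r2 ltac:(lra) ltac:(lra)) as [Hb [Hab1 Hab2]].
  apply lon_dist_bilipschitz_transfer; auto; apply acos_bound.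
Qed.
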